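(* Let $\lambda>0$ and $\mu=\nu>0$, and equip $S^3$ with the generalised Berger metric $g$ described in the context. For $\theta\in(0,\pi/2)$ let $T^2_\theta\subset S^3$ be the torus $\{(\cos\theta\, e^{i\alpha},\sin\theta\, e^{i\beta}):\alpha,\beta\in\mathbb R\}$, and let $H_g$ be its mean curvature vector in $(S^3,g)$. Then for every real number $C\ge 0$ there exists $\theta\in(0,\pi/2)$ such that the mean curvature of $T^2_\theta$ is constant with $\|H_g\|\equiv C$. For $C=0$ such a torus in this family is unique, and for $C>0$ there exist exactly two such tori in this family.
   Context: $S^3=\{(z,w)\in\mathbb C^2: |z|^2+|w|^2=1\}$ is a Lie group with multiplication $(z_1,w_1)\cdot(z_2,w_2)=(z_1z_2-\bar w_1w_2,\ \bar z_1w_2+w_1z_2)$ and inverse $(z,w)^{-1}=(\bar z,-w)$; the same formula defines $p\cdot v$ for $v\in\mathbb C^2$. Let $\langle (z_1,w_1),(z_2,w_2)\rangle=\mathrm{Re}(z_1\bar z_2+w_1\bar w_2)$. For $\lambda,\mu,\nu>0$ the left-invariant Riemannian metric $g$ is $g_p(A,B)=\lambda^2\langle p^{-1}A,(i,0)\rangle\langle p^{-1}B,(i,0)\rangle+\mu^2\langle p^{-1}A,(0,-1)\rangle\langle p^{-1}B,(0,-1)\rangle+\nu^2\langle p^{-1}A,(0,i)\rangle\langle p^{-1}B,(0,i)\rangle+\langle p^{-1}A,(1,0)\rangle\langle p^{-1}B,(1,0)\rangle$ for $A,B\in T_pS^3$. For a surface $T$ in $(S^3,g)$ with $g$-orthonormal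 tangent basis $V_1,V_2$ at $p$, the mean curvature vector is $H_g=\tfrac12(B(V_1,V_1)+B(V_2,V_2))$, where $B$ is the second fundamental form (normal component of the covariant derivative), and $\|H_g\|=\sqrt{g(H_g,H_g)}$. *)

From Stdlib Require Import Reals.
From Coquelicot Require Import Coquelicot.
Open Scope R_scope.

Definition C2 := (C * C)%type.

Definition c2mul (p q : C2) : C2 :=
  let (z1, w1) := p in let (z2, w2) := q in
  (Cminus (Cmult z1 z2) (Cmult (Cconj w1) w2),
   Cplus (Cmult (Cconj z1) w2) (Cmult w1 z2)).

Definition c2inv (p : C2) : C2 := let (z, w) := p in (Cconj z, Copp w).

Definition c2ip (p q : C2) : R :=
  let (z1, w1) := p in let (z2, w2) := q in
  Re (Cplus (Cmult z1 (Cconj z2)) (Cmult w1 (Cconj w2))).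

Definition eI  : C2 := (Ci, RtoC 0).
Definition eJ  : C2 := (RtoC 0, RtoC (-1)).
Definition eK  : C2 := (RtoC 0, Ci).
Definition e1C : C2 := (RtoC 1, RtoC 0).

Definition gmet (lam mu nu : R) (p A B : C2) : R :=
  let a := c2mul (c2inv p) A in let b := c2mul (c2inv p) B in
  lam ^ 2 * c2ip a eI * c2ip b eI
  + mu ^ 2 * c2ip a eJ * c2ip b eJ
  + nu ^ 2 * c2ip a eK * c2ip b eK
  + c2ip a e1C * c2ip b e1C.

(** Local coordinates (theta, alpha, beta) on S^3 (Hopf coordinates):
    phi(theta,alpha,beta) = (cos theta e^{i alpha}, sin theta e^{i beta}).
    The torus T^2_theta is the coordinate surface {theta = const}. *)
Inductive crd : Type := Cth | Cal | Cbe.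
Definition crds : list crd := Cth :: Cal :: Cbe :: nil.
Definition crd_eqb (i j : crd) : bool :=
  match i, j with
  | Cth, Cth | Cal, Cal | Cbe, Cbe => true
  | _, _ => false
  end.

Definition vec := crd -> R.
Definition upd (x : vec) (i : crd) (s : R) : vec :=
  fun j => if crd_eqb i j then s else x j.
Definition mkpt (th al be : R) : vec :=
  fun j => match j with Cth => th | Cal => al | Cbe => be end.

Definition pd (f : vec -> R) (i : crd) (x : vec) : R :=
  Derive (fun s => f (upd x i s)) (x i).

Definition sum3 (f : crd -> R) : R := f Cth + f Cal + f Cbe.

Definition chart (x : vec) : C2 :=
  ((cos (x Cth) * cos (x Cal), cos (x Cth) * sin (x Cal)),
   (sin (x Cth) * cos (x Cbe), sin (x Cth) * sin (x Cbe))).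

Definition dchart (i : crd) (x : vec) : C2 :=
  ((pd (fun y => fst (fst (chart y))) i x, pd (fun y => snd (fst (chart y))) i x),
   (pd (fun y => fst (snd (chart y))) i x, pd (fun y => snd (snd (chart y))) i x)).

Section Geo.
Variables lam mu nu : R.

Definition gij (x : vec) (i j : crd) : R :=
  gmet lam mu nu (chart x) (dchart i x) (dchart j x).

Definition gc (x : vec) (v w : vec) : R :=
  sum3 (fun i => sum3 (fun j => v i * w j * gij x i j)).

(** Christoffel symbols of the first kind of the Levi-Civita connection:
    Gam x i j l = g(nabla_{d_i} d_j, d_l). *)
Definition Gam (x : vec) (i j l : crd) : R :=
  / 2 * (pd (fun y => gij y j l) i x + pd (fun y => gij y i l) j x
         - pd (fun y => gij y i j) l x).

Definition gnabla (x : vec) (v n : vec) : R :=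
  sum3 (fun i => sum3 (fun j => sum3 (fun l => v i * v j * n l * Gam x i j l))).

(** Mean curvature vector (coordinate coefficients) of the surface {theta = const}
    at x, from a g-orthonormal tangent basis v1, v2 and a unit normal n:
    H = 1/2 (B(V1,V1) + B(V2,V2)), B(V,V) = normal component of nabla_V V
    = g(nabla_V V, N) N. *)
Definition Hvec (x : vec) (v1 v2 n : vec) : vec :=
  fun l => / 2 * (gnabla x v1 n + gnabla x v2 n) * n l.

Definition Hnorm (x : vec) (v1 v2 n : vec) : R :=
  sqrt (gc x (Hvec x v1 v2 n) (Hvec x v1 v2 n)).

Definition torus_cmc (th Cst : R) : Prop :=
  forall al be : R, forall v1 v2 n : vec,
    let x := mkpt th al be in
    v1 Cth = 0 -> v2 Cth = 0 ->
    gc x v1 v1 = 1 -> gc x v2 v2 = 1 -> gc x v1 v2 = 0 ->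
    gc x n v1 = 0 -> gc x n v2 = 0 -> gc x n n = 1 ->
    Hnorm x v1 v2 n = Cst.

End Geo.

(* In Hopf coordinates (θ, α, β) and for μ = ν, the metric coefficients depend on θ only,
   ∂θ is g-orthogonal to the tori with |∂θ| = μ, and the Gram matrix G(θ) of ∂α, ∂β has
   det G = λ² μ² cos²θ sin²θ.  So the unit normal of T²_θ is ±∂θ/μ, the second fundamental
   form is B(V, V) = -½ ∂θ g(V, V) in that direction, and summing over an orthonormal frame
   gives ‖H‖ = |tr (G⁻¹ G')| / (4μ) = |(log det G)'| / (4μ) = |cot 2θ| / μ.  The equation
   ‖H‖ = C thus reads 2θ - π/2 = ± atan (Cμ): two roots in (0, π/2), equal iff C = 0. *)

From Stdlib Require Import Reals Lra Nsatz.
From Coquelicot Require Import Coquelicot.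
Open Scope R_scope.

Definition sym2_form (a b d p q p' q' : R) : R :=
  a * p * p' + b * (p * q' + q * p') + d * q * q'.

Definition orthonormal2 (a b d p1 q1 p2 q2 : R) : Prop :=
  sym2_form a b d p1 q1 p1 q1 = 1 /\ sym2_form a b d p2 q2 p2 q2 = 1 /\
  sym2_form a b d p1 q1 p2 q2 = 0.

Lemma orthonormal2_orthogonal_eq0 a b d p1 q1 p2 q2 x y :
  a * d - b * b <> 0 -> orthonormal2 a b d p1 q1 p2 q2 ->
  sym2_form a b d x y p1 q1 = 0 -> sym2_form a b d x y p2 q2 = 0 ->
  x = 0 /\ y = 0.
Proof.
  unfold orthonormal2, sym2_form; intros Hdet [H11 [H22 H12]] H1 H2.
  assert (Hx : x * (a * d - b * b) = 0) by nsatz.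
  assert (Hy : y * (a * d - b * b) = 0) by nsatz.
  split; [apply Rmult_integral in Hx | apply Rmult_integral in Hy]; tauto.
Qed.

(* Σ_k G'(v_k, v_k) = tr (G⁻¹ G') for a G-orthonormal frame (v_1, v_2), times det G. *)
Lemma orthonormal2_trace a b d a' b' d' p1 q1 p2 q2 :
  orthonormal2 a b d p1 q1 p2 q2 ->
  (sym2_form a' b' d' p1 q1 p1 q1 + sym2_form a' b' d' p2 q2 p2 q2) * (a * d - b * b)
  = d * a' - 2 * b * b' + a * d'.
Proof. unfold orthonormal2, sym2_form; intros [H11 [H22 H12]]; nsatz. Qed.

Lemma tan_double_sub_PI2 x : sin x <> 0 -> cos x <> 0 ->
  tan (2 * x - PI / 2) = (sin x ^ 2 - cos x ^ 2) / (2 * sin x * cos x).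
Proof.
  intros Hs Hc; unfold tan.
  rewrite sin_minus, cos_minus, cos_PI2, sin_PI2, sin_2a, cos_2a; field; lra.
Qed.

Lemma atan_pos c : 0 < c -> 0 < atan c.
Proof. intro Hc; rewrite <- atan_0; apply atan_increasing; auto. Qed.

Lemma atan_nonneg c : 0 <= c -> 0 <= atan c.
Proof. intros [Hc | <-]; [left; apply atan_pos | rewrite atan_0; right]; auto. Qed.

Lemma Rabs_tan_eq x c : - (PI / 2) < x < PI / 2 -> 0 <= c ->
  Rabs (tan x) = c <-> x = atan c \/ x = - atan c.
Proof.
  intros Hx Hc; split.
  - intro H; rewrite <- (atan_tan x Hx).
    destruct (Rcase_abs (tan x)) as [Hneg | Hpos].
    + rewrite Rabs_left in H by auto.
      right; rewrite <- atan_opp; f_equal; lra.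
    + rewrite Rabs_right in H by auto.
      left; f_equal; lra.
  - intros [-> | ->]; rewrite ?tan_neg, ?Rabs_Ropp, tan_atan; apply Rabs_pos_eq; auto.
Qed.

Lemma dchart_th y : dchart Cth y =
  ((- sin (y Cth) * cos (y Cal), - sin (y Cth) * sin (y Cal)),
   (cos (y Cth) * cos (y Cbe), cos (y Cth) * sin (y Cbe))).
Proof.
  unfold dchart, pd, chart, upd; simpl.
  repeat f_equal; apply is_derive_unique; auto_derive; auto; ring.
Qed.

Lemma dchart_al y : dchart Cal y =
  ((- cos (y Cth) * sin (y Cal), cos (y Cth) * cos (y Cal)), (0, 0)).
Proof.
  unfold dchart, pd, chart, upd; simpl.
  repeat f_equal; apply is_derive_unique; auto_derive; auto; ring.
Qed.

Lemma dchart_be y : dchart Cbe y =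
  ((0, 0), (- sin (y Cth) * sin (y Cbe), sin (y Cth) * cos (y Cbe))).
Proof.
  unfold dchart, pd, chart, upd; simpl.
  repeat f_equal; apply is_derive_unique; auto_derive; auto; ring.
Qed.

Lemma Hnorm_unit_normal lam mu nu x v1 v2 n : gc lam mu nu x n n = 1 ->
  Hnorm lam mu nu x v1 v2 n
  = Rabs (/ 2 * (gnabla lam mu nu x v1 n + gnabla lam mu nu x v2 n)).
Proof.
  intro Hn; unfold Hnorm, Hvec.
  set (h := / 2 * _).
  replace (gc _ _ _ x _ _) with (h² * gc lam mu nu x n n)
    by (unfold gc, sum3, Rsqr; ring).
  rewrite Hn, Rmult_1_r; apply sqrt_Rsqr_abs.
Qed.

Definition adapted_frame lam mu nu (x v1 v2 n : vec) : Prop :=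
  v1 Cth = 0 /\ v2 Cth = 0 /\
  gc lam mu nu x v1 v1 = 1 /\ gc lam mu nu x v2 v2 = 1 /\ gc lam mu nu x v1 v2 = 0 /\
  gc lam mu nu x n v1 = 0 /\ gc lam mu nu x n v2 = 0 /\ gc lam mu nu x n n = 1.

Lemma torus_cmc_adapted lam mu nu th C : torus_cmc lam mu nu th C <->
  forall al be v1 v2 n, adapted_frame lam mu nu (mkpt th al be) v1 v2 n ->
    Hnorm lam mu nu (mkpt th al be) v1 v2 n = C.
Proof.
  unfold torus_cmc, adapted_frame; split.
  - intros H al be v1 v2 n (? & ? & ? & ? & ? & ? & ? & ?); auto.
  - intros H al be v1 v2 n; simpl; intros; apply H; tauto.
Qed.

Section HopfCoordinates.
Variables lam mu : R.

Definition gram (i j : crd) (t : R) : R :=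
  let c := cos t in let s := sin t in
  match i, j with
  | Cth, Cth => mu ^ 2
  | Cal, Cal => lam ^ 2 * c ^ 4 + mu ^ 2 * s ^ 2 * c ^ 2
  | Cbe, Cbe => lam ^ 2 * s ^ 4 + mu ^ 2 * c ^ 2 * s ^ 2
  | Cal, Cbe | Cbe, Cal => (lam ^ 2 - mu ^ 2) * c ^ 2 * s ^ 2
  | _, _ => 0
  end.

Notation A := (gram Cal Cal).
Notation B := (gram Cal Cbe).
Notation D := (gram Cbe Cbe).

Lemma gij_gram y i j : gij lam mu mu y i j = gram i j (y Cth).
Proof.
  unfold gij.
  assert (E1 := sin2_cos2 (y Cth)); unfold Rsqr in E1.
  assert (E2 := sin2_cos2 (y Cal)); unfold Rsqr in E2.
  assert (E3 := sin2_cos2 (y Cbe)); unfold Rsqr in E3.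
  destruct i, j; rewrite ?dchart_th, ?dchart_al, ?dchart_be;
  unfold gmet, chart, c2mul, c2inv, c2ip, eI, eJ, eK, e1C, gram,
    Cconj, Cmult, Cplus, Cminus, Copp, RtoC, Ci, Re; simpl; nsatz.
Qed.

Lemma ex_derive_gram i j t : ex_derive (gram i j) t.
Proof. destruct i, j; unfold gram; auto_derive; auto. Qed.

Lemma gram_det t : A t * D t - B t * B t = lam ^ 2 * mu ^ 2 * cos t ^ 2 * sin t ^ 2.
Proof. assert (E := sin2_cos2 t); unfold Rsqr in E; unfold gram; simpl; nsatz. Qed.

Lemma gram_det_derive t :
  D t * Derive A t - 2 * B t * Derive B t + A t * Derive D t
  = 2 * lam ^ 2 * mu ^ 2 * cos t * sin t * (cos t ^ 2 - sin t ^ 2).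
Proof.
  assert (Hdet : Derive (fun t => A t * D t - B t * B t) t
               = Derive (fun t => lam ^ 2 * mu ^ 2 * cos t ^ 2 * sin t ^ 2) t).
  { apply Derive_ext; intro u; apply gram_det. }
  assert (Hrhs : Derive (fun t => lam ^ 2 * mu ^ 2 * cos t ^ 2 * sin t ^ 2) t
               = 2 * lam ^ 2 * mu ^ 2 * cos t * sin t * (cos t ^ 2 - sin t ^ 2))
    by (apply is_derive_unique; auto_derive; auto; ring).
  rewrite Hrhs, Derive_minus, !Derive_mult in Hdet;
    auto using ex_derive_mult, ex_derive_gram.
  rewrite <- Hdet; ring.
Qed.

Lemma pd_gij y i j k : pd (fun y => gij lam mu mu y i j) k y =
  match k with Cth => Derive (gram i j) (y Cth) | _ => 0 end.
Proof.
  unfold pd; destruct k; simpl.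
  - apply Derive_ext; intro t; rewrite gij_gram; reflexivity.
  - rewrite (Derive_ext _ (fun _ => gram i j (y Cth))); [apply Derive_const|].
    intro t; rewrite gij_gram; reflexivity.
  - rewrite (Derive_ext _ (fun _ => gram i j (y Cth))); [apply Derive_const|].
    intro t; rewrite gij_gram; reflexivity.
Qed.

Lemma gc_gram x v w : gc lam mu mu x v w =
  mu ^ 2 * v Cth * w Cth
  + sym2_form (A (x Cth)) (B (x Cth)) (D (x Cth)) (v Cal) (v Cbe) (w Cal) (w Cbe).
Proof. unfold gc, sum3, sym2_form; rewrite !gij_gram; simpl; ring. Qed.

Lemma gnabla_tangent_normal x v n : v Cth = 0 -> n Cal = 0 -> n Cbe = 0 ->
  gnabla lam mu mu x v n = - / 2 * n Cth *
    sym2_form (Derive A (x Cth)) (Derive B (x Cth)) (Derive D (x Cth))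
      (v Cal) (v Cbe) (v Cal) (v Cbe).
Proof.
  intros Hv Hna Hnb; unfold gnabla, sum3, Gam, sym2_form.
  rewrite !pd_gij, Hv, Hna, Hnb; change (gram Cbe Cal) with (gram Cal Cbe); ring.
Qed.

End HopfCoordinates.

Section Torus.
Variables lam mu th : R.
Hypothesis lam_gt0 : 0 < lam.
Hypothesis mu_gt0 : 0 < mu.
Hypothesis th_range : 0 < th < PI / 2.

Let cos_gt0 : 0 < cos th. Proof. apply cos_gt_0; lra. Qed.
Let sin_gt0 : 0 < sin th. Proof. apply sin_gt_0; lra. Qed.

Notation A := (gram lam mu Cal Cal).
Notation B := (gram lam mu Cal Cbe).
Notation D := (gram lam mu Cbe Cbe).

Lemma torus_gram_det_gt0 : 0 < A th * D th - B th * B th.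
Proof.
  rewrite gram_det.
  replace (lam ^ 2 * mu ^ 2 * cos th ^ 2 * sin th ^ 2)
    with ((lam * mu * cos th * sin th) ^ 2) by ring.
  apply pow_lt; repeat apply Rmult_lt_0_compat; auto.
Qed.

Lemma torus_tangent_orthonormal x v1 v2 n : x Cth = th ->
  adapted_frame lam mu mu x v1 v2 n ->
  orthonormal2 (A th) (B th) (D th) (v1 Cal) (v1 Cbe) (v2 Cal) (v2 Cbe).
Proof.
  intros Hx (H1 & H2 & G11 & G22 & G12 & _).
  rewrite !gc_gram, Hx, H1, H2 in *.
  unfold orthonormal2; lra.
Qed.

Lemma torus_unit_normal x v1 v2 n : x Cth = th ->
  adapted_frame lam mu mu x v1 v2 n ->
  n Cal = 0 /\ n Cbe = 0 /\ (mu * n Cth) ^ 2 = 1.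
Proof.
  intros Hx Hf.
  assert (Hframe := torus_tangent_orthonormal _ _ _ _ Hx Hf).
  destruct Hf as (H1 & H2 & _ & _ & _ & N1 & N2 & NN).
  rewrite !gc_gram, Hx, H1, H2 in *.
  assert (Hdet : A th * D th - B th * B th <> 0)
    by (pose proof torus_gram_det_gt0; lra).
  destruct (orthonormal2_orthogonal_eq0 _ _ _ _ _ _ _ (n Cal) (n Cbe) Hdet Hframe)
    as [Na Nb]; try lra.
  rewrite Na, Nb in NN; unfold sym2_form in NN.
  repeat split; auto.
  rewrite <- NN; ring.
Qed.

Lemma torus_Hnorm al be v1 v2 n :
  adapted_frame lam mu mu (mkpt th al be) v1 v2 n ->
  Hnorm lam mu mu (mkpt th al be) v1 v2 n = Rabs (tan (2 * th - PI / 2)) / mu.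
Proof.
  intro Hf.
  destruct (torus_unit_normal _ _ _ _ eq_refl Hf) as (Na & Nb & Nt).
  assert (Htr := orthonormal2_trace _ _ _ (Derive A th) (Derive B th) (Derive D th)
                   _ _ _ _ (torus_tangent_orthonormal _ _ _ _ eq_refl Hf)).
  rewrite gram_det_derive, gram_det in Htr.
  destruct Hf as (H1 & H2 & _ & _ & _ & _ & _ & NN).
  rewrite Hnorm_unit_normal, !gnabla_tangent_normal by auto.
  change (mkpt th al be Cth) with th.
  set (S := _ + _) in Htr.
  assert (HS : S = 2 * (cos th ^ 2 - sin th ^ 2) / (cos th * sin th)).
  { apply (Rmult_eq_reg_r (lam ^ 2 * mu ^ 2 * cos th ^ 2 * sin th ^ 2)).
    - rewrite Htr; field; lra.
    - rewrite <- gram_det; apply Rgt_not_eq, torus_gram_det_gt0. }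
  match goal with |- Rabs ?h = _ =>
    replace h with (- (n Cth / 4) * S) by (unfold S; field) end.
  unfold Rdiv; rewrite <- (Rabs_pos_eq (/ mu)), <- Rabs_mult
    by (left; apply Rinv_0_lt_compat; auto).
  apply Rsqr_eq_abs_0; rewrite HS, tan_double_sub_PI2 by lra.
  unfold Rsqr; field_simplify_eq; [| repeat split; lra].
  transitivity (16 * (mu * n Cth) ^ 2 * (cos th ^ 2 - sin th ^ 2) ^ 2);
    [ring | rewrite Nt; ring].
Qed.

Lemma torus_adapted_frame :
  exists v1 v2 n, adapted_frame lam mu mu (mkpt th 0 0) v1 v2 n.
Proof.
  (* The Hopf fibre direction ∂α + ∂β has length λ; the second vector spans its
     g-orthogonal complement in the torus. *)
  exists (mkpt 0 (/ lam) (/ lam)),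
         (mkpt 0 (sin th / (mu * cos th)) (- cos th / (mu * sin th))),
         (mkpt (/ mu) 0 0).
  assert (E := sin2_cos2 th); unfold Rsqr in E.
  unfold adapted_frame; rewrite !gc_gram; cbn [mkpt]; unfold sym2_form, gram.
  repeat split; field_simplify_eq; try (clear - E; simpl; nsatz); repeat split; lra.
Qed.

Lemma torus_cmc_iff_tan C :
  torus_cmc lam mu mu th C <-> Rabs (tan (2 * th - PI / 2)) / mu = C.
Proof.
  rewrite torus_cmc_adapted; split.
  - destruct torus_adapted_frame as (v1 & v2 & n & Hf).
    intro H; rewrite <- (H 0 0 v1 v2 n Hf); symmetry; exact (torus_Hnorm _ _ _ _ _ Hf).
  - intros <- al be v1 v2 n; apply torus_Hnorm.
Qed.

End Torus.

Lemma torus_cmc_solutions lam mu th C : 0 < lam -> 0 < mu -> 0 < th < PI / 2 -> 0 <= C ->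
  torus_cmc lam mu mu th C <->
  th = PI / 4 + atan (C * mu) / 2 \/ th = PI / 4 - atan (C * mu) / 2.
Proof.
  intros Hlam Hmu Hth HC.
  rewrite torus_cmc_iff_tan by auto.
  assert (Hdiv : Rabs (tan (2 * th - PI / 2)) / mu = C
                 <-> Rabs (tan (2 * th - PI / 2)) = C * mu).
  { split; intro H; [rewrite <- H | rewrite H]; field; lra. }
  rewrite Hdiv, Rabs_tan_eq by (try apply Rmult_le_pos; lra).
  lra.
Qed.

Theorem mainTheorem3 :
  forall lam mu nu : R, 0 < lam -> 0 < mu -> 0 < nu -> mu = nu ->
  forall Cst : R, 0 <= Cst ->
    (exists th, 0 < th < PI / 2 /\ torus_cmc lam mu nu th Cst) /\
    (Cst = 0 ->
       forall th1 th2, 0 < th1 < PI / 2 -> 0 < th2 < PI / 2 ->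
         torus_cmc lam mu nu th1 Cst -> torus_cmc lam mu nu th2 Cst -> th1 = th2) /\
    (0 < Cst ->
       exists th1 th2,
         0 < th1 < PI / 2 /\ 0 < th2 < PI / 2 /\ th1 <> th2 /\
         torus_cmc lam mu nu th1 Cst /\ torus_cmc lam mu nu th2 Cst /\
         forall th, 0 < th < PI / 2 -> torus_cmc lam mu nu th Cst ->
           th = th1 \/ th = th2).
Proof.
  intros lam mu nu Hlam Hmu _ <- C HC.
  assert (Ha : 0 <= atan (C * mu) < PI / 2).
  { split; [apply atan_nonneg, Rmult_le_pos | apply atan_bound]; lra. }
  set (a := atan (C * mu)) in Ha.
  assert (Hsol := fun th Hth => torus_cmc_solutions lam mu th C Hlam Hmu Hth HC).
  fold a in Hsol.
  assert (Hlo : 0 < PI / 4 - a / 2 < PI / 2) by lra.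
  assert (Hhi : 0 < PI / 4 + a / 2 < PI / 2) by lra.
  split; [|split].
  - exists (PI / 4 - a / 2); split; [|apply Hsol]; auto.
  - intros -> th1 th2 H1 H2 T1 T2.
    assert (Ha0 : a = 0) by (unfold a; rewrite Rmult_0_l; apply atan_0).
    apply Hsol in T1; apply Hsol in T2; auto; lra.
  - intro HCpos.
    assert (Hapos : 0 < a) by (apply atan_pos, Rmult_lt_0_compat; auto).
    exists (PI / 4 + a / 2), (PI / 4 - a / 2).
    repeat split; try lra; intros; apply Hsol; auto.
Qed.
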